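(* Let $C$ be a conformal algebra and let $f(a_1,\dots,a_n)=\sum_{\sigma\in S_n} t_\sigma(a_{1\sigma},\dots,a_{n\sigma})$ be a homogeneous multilinear non-associative polynomial over $\Bbbk$. If $C$, regarded as a pseudoalgebra, satisfies $f^*(a_1,\dots,a_n)=\sum_{\sigma\in S_n}(\sigma\otimes_H \mathrm{id}_C)\, t^*_\sigma(a_{1\sigma},\dots,a_{n\sigma})=0$ for all $a_1,\dots,a_n\in C$, then the coefficient algebra $\operatorname{Coeff}C$ satisfies the identity $f=0$.
   Context: Let $\Bbbk$ be a field of characteristic $0$ and $H=\Bbbk[D]$ the polynomial algebra, regarded as a Hopf algebra with $\Delta(D)=D\otimes1+1\otimes D$, $\varepsilon(D)=0$, $S(D)=-D$. Sweedler notation: $\Delta(f)=f_{(1)}\otimes f_{(2)}$; iterated coproduct $\Delta^{(1)}=\mathrm{id}_H$, $\Delta^{(k+1)}=(\mathrm{id}_H\otimes\Delta^{(k)})\Delta$. $H$ acts on $H^{\otimes n}$ from the right by $(f_1\otimes\cdots\otimes f_n)h=f_1h_{(1)}\otimes\cdots\otimes f_nh_{(n)}$, and for a left $H$-module $M$ the space $H^{\otimes n}\otimes_H M$ is formed with respect to this action (so $H\otimes_H M\cong M$). A conformal algebra is a unital left $H$-module $C$ with $\Bbbk$-bilinear operations $a_{(n)}b$, $n\ge0$, such that for all $a,b\in C$: $a_{(n)}b=0$ for all sufficiently large $n$; $(Da)_{(n)}b=-n\,a_{(n-1)}b$ and $a_{(n)}(Db)=D(a_{(n)}b)+n\,a_{(n-1)}b$.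 Pseudoproduct: $a*b=\sum_{s\ge0}\frac{(-D)^s}{s!}\otimes1\otimes_H(a_{(s)}b)\in (H\otimes H)\otimes_H C$. Expanded pseudoproduct: for $F\in H^{\otimes n}$, $G\in H^{\otimes m}$, $a,b\in C$ with $a*b=\sum_i f_i\otimes g_i\otimes_H c_i$, set $(F\otimes_H a)*(G\otimes_H b)=\sum_i F\Delta^{(n)}(f_i)\otimes G\Delta^{(m)}(g_i)\otimes_H c_i\in H^{\otimes(n+m)}\otimes_H C$ (extended linearly). Coefficient algebra: $\operatorname{Coeff}C=\Bbbk[t,t^{-1}]\otimes_H C$, where $\Bbbk[t,t^{-1}]$ is a right $H$-module via $t^nD=-nt^{n-1}$; writing $a(n)=t^n\otimes_H a$, the multiplication is $a(n)b(m)=\sum_{s\ge0}\binom{n}{s}(a_{(s)}b)(n+m-s)$. Pseudo-form of an identity: each $t_\sigma(b_1,\dots,b_n)$ is a linear combination of bracketings of the word $b_1b_2\cdots b_n$ (letters in this order), and $i\sigma$ is the image of $i$ under $\sigma$. For a bracketing $t$, $t^*(b_1,\dots,b_n)\in H^{\otimes n}\otimes_H C$ is obtained by replacing every product by the expanded pseudoproduct, each $b_i\in C$ being regarded as $1\otimes_H b_i\in H\otimes_H C$; extend linearly. For $\sigma\in S_n$, $\sigma\otimes_H\mathrm{id}_C$ denotes the map on $H^{\otimes n}\otimes_H C$ induced by the permutation of tensor factors of $H^{\otimes n}$ sending the $k$-th factor to position $k\sigma$. *)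

From HB Require Import structures.
From mathcomp Require Import all_boot all_order all_algebra all_fingroup.
From mathcomp Require Import mpoly.

Set Implicit Arguments.
Unset Strict Implicit.
Unset Printing Implicit Defensive.

Import GRing.Theory.
Local Open Scope ring_scope.

(* Conformal algebras over K.  C is a K-vector space, D : C -> C the    *)
(* action of the generator D of H = K[D]; prod n a b = a_(n) b.         *)
Section Conformal.
Variables (K : fieldType) (C : lmodType K).
Variables (D : C -> C) (prod : nat -> C -> C -> C) (loc : C -> C -> nat).

Definition is_conformal : Prop :=
  [/\ (forall (k : K) (a b : C), D (k *: a + b) = k *: D a + D b) /\
      (forall n (k : K) (a a' b : C),
          prod n (k *: a + a') b = k *: prod n a b + prod n a' b)
      /\
      (forall n (k : K) (a b b' : C),
          prod n a (k *: b + b') = k *: prod n a b + prod n a b'),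
      (forall (a b : C) n, (loc a b <= n)%N -> prod n a b = 0),
      (forall n (a b : C), prod n (D a) b = - (n%:R *: prod n.-1 a b))
    & (forall n (a b : C), prod n a (D b) = D (prod n a b) + n%:R *: prod n.-1 a b)].

Definition hact (h : {poly K}) (c : C) : C :=
  \sum_(i < size h) h`_i *: iter i D c.

(* H^{(x)n} is identified with {mpoly K[n]}: D in the i-th tensor       *)
(* factor is the variable 'X_i.                                          *)

(* iterated coproduct Delta^(n)(h) = h(X_0 + ... + X_{n-1}) *)
Definition Delta (n : nat) (h : {poly K}) : {mpoly K[n]} :=
  (map_poly (fun c : K => c%:MP) h).[\sum_(i < n) 'X_i].

Definition tens (n m : nat) (F : {mpoly K[n]}) (G : {mpoly K[m]})
  : {mpoly K[n + m]} :=
  (F \mPo [tuple 'X_(lshift m i) | i < n]) *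
  (G \mPo [tuple 'X_(rshift n j) | j < m]).

(* sigma (x)_H id : k-th tensor factor sent to position k sigma *)
Definition perm_tens (n : nat) (s : 'S_n) (F : {mpoly K[n]}) : {mpoly K[n]} :=
  F \mPo [tuple 'X_(s i) | i < n].

(* An element of H^{(x)n} (x)_H C is represented by a finite formal sum *)
(* sum_i F_i (x)_H c_i; it is zero iff every H-balanced K-bilinear map  *)
(* out of H^{(x)n} x C kills it (universal property of (x)_H).          *)
Definition tensH_zero (n : nat) (x : seq ({mpoly K[n]} * C)) : Prop :=
  forall (W : lmodType K) (beta : {mpoly K[n]} -> C -> W),
    (forall (k : K) F F' c, beta (k *: F + F') c = k *: beta F c + beta F' c) ->
    (forall (k : K) F c c', beta F (k *: c + c') = k *: beta F c + beta F c') ->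
    (forall F (h : {poly K}) c, beta (F * Delta n h) c = beta F (hact h c)) ->
    \sum_(p <- x) beta p.1 p.2 = 0.

Definition mDs (s : nat) : {poly K} := ((-1) ^+ s / (s`!)%:R) *: 'X^s.

(* expanded pseudoproduct, extended linearly; uses
   a * b = sum_s (-D)^s/s! (x) 1 (x)_H a_(s) b *)
Definition pseudo_mul (n m : nat) (x : seq ({mpoly K[n]} * C))
  (y : seq ({mpoly K[m]} * C)) : seq ({mpoly K[n + m]} * C) :=
  flatten [seq [seq (tens (p.1 * Delta n (mDs s)) (q.1 * Delta m 1),
                     prod s p.2 q.2) | s <- iota 0 (loc p.2 q.2)]
          | p <- x, q <- y].

End Conformal.

(* bracketings of a word with n letters *)
Inductive btree : nat -> Type :=
| BLeaf : btree 1
| BNode : forall n m : nat, btree n -> btree m -> btree (n + m).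

Section Eval.
Variables (K : fieldType) (C : lmodType K).
Variables (D : C -> C) (prod : nat -> C -> C -> C) (loc : C -> C -> nat).

Fixpoint pseudo_eval (n : nat) (t : btree n) (w : seq C)
  : seq ({mpoly K[n]} * C) :=
  match t in btree n return seq ({mpoly K[n]} * C) with
  | BLeaf => [:: (1, head 0 w)]
  | BNode n1 n2 t1 t2 =>
      pseudo_mul prod loc (pseudo_eval t1 (take n1 w))
                          (pseudo_eval t2 (drop n1 w))
  end.

(* f^*(a_1,...,a_n) = sum_sigma (sigma (x)_H id) t_sigma^*(a_{1 sigma},...),
   where t_sigma = sum_(c, t) c t  is given by the list ts sigma *)
Definition fstar (n : nat) (ts : 'S_n -> seq (K * btree n)) (a : 'I_n -> C)
  : seq ({mpoly K[n]} * C) :=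
  flatten [seq flatten [seq [seq (perm_tens s (ct.1 *: p.1), p.2)
                             | p <- pseudo_eval ct.2 [seq a (s i) | i <- enum 'I_n]]
                       | ct <- ts s]
          | s : 'S_n <- enum 'S_n].

(* Coeff C = K[t,t^-1] (x)_H C.  An element is represented by a finite  *)
(* formal sum of a(n) = t^n (x)_H a, i.e. a seq (int * C).              *)

Definition binz (n : int) (s : nat) : K :=
  (\prod_(i < s) (n - i%:Z)%:~R) / (s`!)%:R.

Definition ffz (n : int) (k : nat) : K := \prod_(i < k) (n - i%:Z)%:~R.

(* right action of H on K[t,t^-1]: t^n . D^k = (-1)^k n(n-1)..(n-k+1) t^(n-k).
   A K-bilinear map K[t,t^-1] x C -> W is given by its values
   beta n c = beta(t^n, c) on the basis t^n; it is H-balanced iff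
   beta(t^n . h, c) = beta(t^n, h c). *)
Definition coeff_zero (x : seq (int * C)) : Prop :=
  forall (W : lmodType K) (beta : int -> C -> W),
    (forall n (k : K) c c', beta n (k *: c + c') = k *: beta n c + beta n c') ->
    (forall n (h : {poly K}) c,
        \sum_(k < size h) (h`_k * (-1) ^+ k * ffz n k) *: beta (n - k%:Z) c
        = beta n (hact D h c)) ->
    \sum_(p <- x) beta p.1 p.2 = 0.

(* product of Coeff C, extended bilinearly:
   a(n) b(m) = sum_s binom(n,s) (a_(s) b)(n+m-s) *)
Definition coeff_mul (x y : seq (int * C)) : seq (int * C) :=
  flatten [seq [seq (p.1 + q.1 - s%:Z, binz p.1 s *: prod s p.2 q.2)
               | s <- iota 0 (loc p.2 q.2)]
          | p <- x, q <- y].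

Fixpoint coeff_eval (n : nat) (t : btree n) (w : seq (seq (int * C)))
  : seq (int * C) :=
  match t with
  | BLeaf => head [::] w
  | BNode n1 n2 t1 t2 =>
      coeff_mul (coeff_eval t1 (take n1 w)) (coeff_eval t2 (drop n1 w))
  end.

Definition coeff_f (n : nat) (ts : 'S_n -> seq (K * btree n))
  (x : 'I_n -> seq (int * C)) : seq (int * C) :=
  flatten [seq flatten [seq [seq (p.1, ct.1 *: p.2)
                             | p <- coeff_eval ct.2 [seq x (s i) | i <- enum 'I_n]]
                       | ct <- ts s]
          | s : 'S_n <- enum 'S_n].

End Eval.

(* An H-balanced bilinear map beta on K[t,t^-1] x C together with exponents
   mu_1, ..., mu_n induces an H-balanced bilinear map on H^(x)n x C: let F act
   on t^mu_1 (x) ... (x) t^mu_n, multiply out the factors and apply beta.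
   Since t^N . (-D)^s/s! = binom(N, s) t^(N - s), this map sends the expanded
   pseudoproduct t^*(a_1, ..., a_n) to the product t(a_1(mu_1), ..., a_n(mu_n))
   in Coeff C, and permuting tensor factors by sigma permutes the exponents.
   Hence f(a_1(mu_1), ..., a_n(mu_n)) is the image of f^*(a_1, ..., a_n) = 0;
   general elements of Coeff C follow by multilinearity. *)

From HB Require Import structures.
From mathcomp Require Import all_boot all_order all_algebra all_fingroup.
From mathcomp Require Import ssrcomplements mpoly.
From mathcomp Require Import zify.

Set Implicit Arguments.
Unset Strict Implicit.
Unset Printing Implicit Defensive.

Import GRing.Theory.
Local Open Scope ring_scope.

Section LinearFacts.
Variables (K : fieldType) (U V : lmodType K) (f : U -> V).
Hypothesis linear_f : linear f.

Lemma linear0_of : f 0 = 0.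
Proof. exact: (linear0 (HB.pack f (GRing.isLinear.Build _ _ _ _ f linear_f))). Qed.

Lemma linearZ_of a u : f (a *: u) = a *: f u.
Proof. exact: (linearZ_LR (HB.pack f (GRing.isLinear.Build _ _ _ _ f linear_f))). Qed.

End LinearFacts.

Section MonomialExtension.
Variables (K : fieldType) (W : lmodType K) (n : nat).
Implicit Types (F : {mpoly K[n]}) (g : 'X_{1..n} -> W).

Definition mlin g F : W := \sum_(m <- msupp F) F@_m *: g m.

Lemma mlin_bounded g F i : (msize F <= i)%N ->
  mlin g F = \sum_(m : 'X_{1..n < i}) F@_m *: g m.
Proof.
move=> le_Fi; rewrite /mlin (big_mksub 'X_{1..n < i}) ?msupp_uniq //=; last first.
  by move=> m /msize_mdeg_lt /leq_trans; apply.
by rewrite big_rmcond //= => m /memN_msupp_eq0 ->; rewrite scale0r.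
Qed.

Lemma mlin_is_linear g : linear (mlin g).
Proof.
move=> a F F'; set i := (msize F + msize F' + msize (a *: F + F'))%N.
rewrite !(mlin_bounded g (i := i)); try by rewrite /i; lia.
rewrite scaler_sumr -big_split /=; apply: eq_bigr => m _.
by rewrite mcoeffD mcoeffZ scalerDl scalerA.
Qed.

HB.instance Definition _ g :=
  GRing.isLinear.Build K {mpoly K[n]} W *:%R (mlin g) (mlin_is_linear g).

Lemma mlinX g m : mlin g 'X_[m] = g m.
Proof. by rewrite /mlin msuppX big_seq1 mcoeffX eqxx scale1r. Qed.

Lemma eq_mlin g g' : g =1 g' -> mlin g =1 mlin g'.
Proof. by move=> eq_g F; apply: eq_bigr => m _; rewrite eq_g. Qed.

Lemma mlin_sum_fun (I : Type) (r : seq I) (h : I -> 'X_{1..n} -> W) F :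
  mlin (fun m => \sum_(j <- r) h j m) F = \sum_(j <- r) mlin (h j) F.
Proof. by rewrite /mlin exchange_big; apply: eq_bigr => m _; rewrite scaler_sumr. Qed.

Lemma mlin_scale_fun (a : K) g F : mlin (fun m => a *: g m) F = a *: mlin g F.
Proof. by rewrite /mlin scaler_sumr; apply: eq_bigr => m _; rewrite !scalerA mulrC. Qed.

Lemma linear_mlinE (L : {mpoly K[n]} -> W) :
  linear L -> L =1 mlin (fun m => L 'X_[m]).
Proof.
move=> linL F.
pose L' : {linear {mpoly K[n]} -> W} := HB.pack L (GRing.isLinear.Build _ _ _ _ L linL).
have -> : L F = L' (\sum_(m <- msupp F) F@_m *: 'X_[m]) by rewrite -mpolyE.
by rewrite linear_sum; apply: eq_bigr => m _; rewrite linearZ.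
Qed.

End MonomialExtension.

Lemma mlin_comp (K : fieldType) (W : lmodType K) n n'
    (Phi : {mpoly K[n']} -> {mpoly K[n]}) (g : 'X_{1..n} -> W) :
  linear Phi -> forall p, mlin g (Phi p) = mlin (fun m => mlin g (Phi 'X_[m])) p.
Proof. by move=> linPhi; apply: linear_mlinE => a p q /=; rewrite linPhi linearP. Qed.

Lemma Posz_sum (I : finType) (f : I -> nat) : ((\sum_i f i)%N)%:Z = \sum_i (f i)%:Z.
Proof. by rewrite -natz natr_sum; apply: eq_bigr => i _; rewrite natz. Qed.

Lemma sum_coef_widen (R : nzRingType) (V : nmodType) (p : {poly R}) L
    (G : nat -> R -> V) :
  (size p <= L)%N -> (forall j, G j 0 = 0) ->
  \sum_(j < size p) G j p`_j = \sum_(j < L) G j p`_j.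
Proof.
move=> le_pL G0; rewrite (big_ord_widen L (fun j => G j p`_j)) // big_mkcond /=.
by apply: eq_bigr => j _; case: ltnP => // /(nth_default 0) ->; rewrite G0.
Qed.

Section LaurentPairing.
Variables (K : fieldType) (W : lmodType K).

(* t^N . D^j = tD_coef N j t^(N - j) in the right H-module K[t,t^-1]. *)
Definition tD_coef (N : int) (j : nat) : K := (-1) ^+ j * ffz K N j.

Lemma tD_coef0 N : tD_coef N 0 = 1.
Proof. by rewrite /tD_coef /ffz big_ord0 mulr1. Qed.

Lemma tD_coefS N j : tD_coef N j.+1 = tD_coef N j * - (N - j%:Z)%:~R.
Proof. by rewrite /tD_coef /ffz big_ord_recr exprSr mulrN mulr1 mulNr mulrN mulrA. Qed.

Variable n : nat.
Implicit Types (mu : 'I_n -> int) (phi : int -> W) (F : {mpoly K[n]}).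

Definition tD_mcoef mu (m : 'X_{1..n}) : K := \prod_i tD_coef (mu i) (m i).

(* F acts on t^mu_1 (x) ... (x) t^mu_n, each resulting monomial is multiplied
   out to some t^N, and t^N is sent to phi N. *)
Definition tpair mu phi : {mpoly K[n]} -> W :=
  mlin (fun m => tD_mcoef mu m *: phi (\sum_i mu i - (mdeg m)%:Z)).

HB.instance Definition _ mu phi := GRing.Linear.on (tpair mu phi).

Lemma eq_tpair mu phi phi' : phi =1 phi' -> tpair mu phi =1 tpair mu phi'.
Proof. by move=> eq_phi; apply: eq_mlin => m; rewrite eq_phi. Qed.

Lemma eq_tpair_mu mu mu' phi : mu =1 mu' -> tpair mu phi =1 tpair mu' phi.
Proof.
move=> eq_mu; apply: eq_mlin => m; rewrite /tD_mcoef.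
by congr (_ *: phi (_ - _)); apply: eq_bigr => i _; rewrite eq_mu.
Qed.

Lemma tpair_sum_fun mu (I : Type) (r : seq I) (phi : I -> int -> W) F :
  tpair mu (fun N => \sum_(j <- r) phi j N) F = \sum_(j <- r) tpair mu (phi j) F.
Proof. by rewrite /tpair -mlin_sum_fun; apply: eq_mlin => m; rewrite scaler_sumr. Qed.

Lemma tpair_scale_fun mu (a : K) phi F :
  tpair mu (fun N => a *: phi N) F = a *: tpair mu phi F.
Proof. by rewrite /tpair -mlin_scale_fun; apply: eq_mlin => m; rewrite !scalerA mulrC. Qed.

Lemma tpair_add_fun mu phi phi' F :
  tpair mu (fun N => phi N + phi' N) F = tpair mu phi F + tpair mu phi' F.
Proof. by rewrite /tpair /mlin -big_split; apply: eq_bigr => m _; rewrite !scalerDr. Qed.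

Lemma tpair1 mu phi : tpair mu phi 1 = phi (\sum_i mu i).
Proof.
rewrite /tpair -mpolyX0 mlinX mdeg0 subr0 /tD_mcoef big1 ?scale1r // => i _.
by rewrite mnm0E tD_coef0.
Qed.

Lemma tD_mcoefD1 mu m i :
  tD_mcoef mu (m + U_(i))%MM = tD_mcoef mu m * - (mu i - (m i)%:Z)%:~R.
Proof.
rewrite /tD_mcoef (bigD1 i) // [in RHS](bigD1 i) //= mnmDE mnm1E eqxx addn1 tD_coefS.
rewrite mulrAC; congr (_ * _ * _).
by apply: eq_bigr => j /negbTE ji; rewrite mnmDE mnm1E eq_sym ji addn0.
Qed.

Local Notation Xsum := (\sum_(i < n) 'X_i : {mpoly K[n]}).

Lemma tpair_mulXsum mu phi F :
  tpair mu phi (F * Xsum) = tpair mu (fun N => - N%:~R *: phi (N - 1)) F.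
Proof.
rewrite /tpair (mlin_comp _ (Phi := fun F => F * Xsum)); last first.
  by move=> a p q; rewrite mulrDl scalerAl.
apply: eq_mlin => m; rewrite mulr_sumr.
rewrite (eq_bigr (fun i => 'X_[m + U_(i)])) => [|i _]; last by rewrite mpolyXD.
rewrite linear_sum /=.
under eq_bigr => i _ do rewrite mlinX mdegD mdeg1 PoszD opprD addrA.
rewrite -scaler_suml scalerA; congr (_ *: _).
rewrite (eq_bigr _ (fun i _ => tD_mcoefD1 mu m i)).
by rewrite -mulr_sumr sumrN mdegE Posz_sum -sumrB rmorph_sum.
Qed.

Lemma tpair_mulXsumX mu phi j F :
  tpair mu phi (F * Xsum ^+ j) = tpair mu (fun N => tD_coef N j *: phi (N - j%:Z)) F.
Proof.
elim: j F phi => [|j IHj] F phi.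
  by rewrite expr0 mulr1; apply: eq_tpair => N; rewrite tD_coef0 scale1r subr0.
rewrite exprSr mulrA tpair_mulXsum IHj; apply: eq_tpair => N.
by rewrite scalerA tD_coefS -addrA -opprD -PoszD addn1.
Qed.

Lemma Delta_sum (h : {poly K}) : Delta n h = \sum_(j < size h) h`_j *: Xsum ^+ j.
Proof.
rewrite /Delta horner_coef size_map_inj_poly //; last exact: (can_inj (@mpolyCK n K)).
by apply: eq_bigr => j _; rewrite coef_map_id0 // -mul_mpolyC.
Qed.

Lemma Delta1 : Delta n (1 : {poly K}) = 1.
Proof. by rewrite Delta_sum size_poly1 big_ord1 coef1 expr0 scale1r. Qed.

Lemma tpair_Delta mu phi (h : {poly K}) F :
  tpair mu phi (F * Delta n h) =
  tpair mu (fun N => \sum_(j < size h) (h`_j * tD_coef N j) *: phi (N - j%:Z)) F.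
Proof.
rewrite Delta_sum mulr_sumr linear_sum tpair_sum_fun; apply: eq_bigr => j _.
rewrite -scalerAr linearZ /= tpair_mulXsumX -tpair_scale_fun.
by apply: eq_tpair => N; rewrite scalerA.
Qed.

Lemma tpair_Delta_mDs mu phi s F :
  tpair mu phi (F * Delta n (mDs K s)) =
  tpair mu (fun N => binz K N s *: phi (N - s%:Z)) F.
Proof.
rewrite tpair_Delta; apply: eq_tpair => N.
rewrite (@sum_coef_widen _ _ _ s.+1 (fun j c => (c * tD_coef N j) *: phi (N - j%:Z))); first last.
- by move=> j; rewrite mul0r scale0r.
- by rewrite (leq_trans (size_scale_leq _ _)) // size_polyXn.
rewrite big_ord_recr /= big1 ?add0r => [|j _]; last first.
  by rewrite coefZ coefXn ltn_eqF ?mulr0 ?mul0r ?scale0r.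
rewrite coefZ coefXn eqxx mulr1; congr (_ *: _).
rewrite /binz /tD_coef -/(ffz K N s) mulrAC mulrA.
by rewrite -exprD addnn -signr_odd odd_double mul1r.
Qed.

End LaurentPairing.

Lemma tpair_perm (K : fieldType) (W : lmodType K) n (s : 'S_n) (mu : 'I_n -> int)
    (phi : int -> W) (F : {mpoly K[n]}) :
  tpair mu phi (perm_tens s F) = tpair (fun i => mu (s i)) phi F.
Proof.
rewrite /tpair mlin_comp => [|a p q]; last by rewrite /perm_tens linearP.
apply: eq_mlin => m; rewrite /perm_tens comp_mpolyX.
have -> : \prod_(i < n) tnth [tuple 'X_(s i) | i < n] i ^+ m i =
          'X_[[multinom m ((s^-1)%g i) | i < n]] :> {mpoly K[n]}.
  by rewrite -msymX /msym mmapX /mmap1; apply: eq_bigr => i _; rewrite tnth_mktuple.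
rewrite mlinX mdeg_mperm (reindex_inj (@perm_inj _ s)) /=; congr (_ *: phi (_ - _)).
rewrite /tD_mcoef (reindex_inj (@perm_inj _ s)).
by apply: eq_bigr => i _; rewrite mnmE permK.
Qed.

Section TensorPairing.
Variables (K : fieldType) (W : lmodType K) (n1 n2 : nat).

Definition mcat (k : 'X_{1..n1}) (l : 'X_{1..n2}) : 'X_{1..n1 + n2} :=
  [multinom (match split i with inl a => k a | inr b => l b end) | i < n1 + n2].

Lemma mcat_lshift k l i : mcat k l (lshift n2 i) = k i.
Proof. by rewrite /mcat mnmE (unsplitK (inl _ i)). Qed.

Lemma mcat_rshift k l j : mcat k l (rshift n1 j) = l j.
Proof. by rewrite /mcat mnmE (unsplitK (inr _ j)). Qed.

Lemma mdeg_mcat k l : mdeg (mcat k l) = (mdeg k + mdeg l)%N.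
Proof.
rewrite !mdegE big_split_ord /=.
by congr (_ + _)%N; apply: eq_bigr => i _; rewrite ?mcat_lshift ?mcat_rshift.
Qed.

Lemma tensX k l : tens ('X_[k] : {mpoly K[n1]}) ('X_[l] : {mpoly K[n2]}) = 'X_[mcat k l].
Proof.
rewrite /tens !comp_mpolyX mpolyXE_id big_split_ord /=.
by congr (_ * _); apply: eq_bigr => i _; rewrite tnth_mktuple ?mcat_lshift ?mcat_rshift.
Qed.

Lemma tD_mcoef_mcat (mu : 'I_(n1 + n2) -> int) k l :
  tD_mcoef K mu (mcat k l) =
  tD_mcoef K (fun i => mu (lshift n2 i)) k * tD_mcoef K (fun j => mu (rshift n1 j)) l.
Proof.
rewrite /tD_mcoef big_split_ord /=.
by congr (_ * _); apply: eq_bigr => i _; rewrite ?mcat_lshift ?mcat_rshift.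
Qed.

Lemma tens_linearl (G : {mpoly K[n2]}) : linear (fun F : {mpoly K[n1]} => tens F G).
Proof. by move=> a F F'; rewrite /tens linearP mulrDl scalerAl. Qed.

Lemma tens_linearr (F : {mpoly K[n1]}) : linear (fun G : {mpoly K[n2]} => tens F G).
Proof. by move=> a G G'; rewrite /tens linearP mulrDr scalerAr. Qed.

Lemma tpair_tens (mu : 'I_(n1 + n2) -> int) (phi : int -> W)
    (F : {mpoly K[n1]}) (G : {mpoly K[n2]}) :
  tpair mu phi (tens F G) =
  tpair (fun i => mu (lshift n2 i))
    (fun N => tpair (fun j => mu (rshift n1 j)) (fun N' => phi (N + N')) G) F.
Proof.
rewrite /tpair (mlin_comp _ (Phi := fun F => tens F G)); last exact: tens_linearl.
apply: eq_mlin => k; rewrite (mlin_comp _ (Phi := tens 'X_[k])); last exact: tens_linearr.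
rewrite -mlin_scale_fun; apply: eq_mlin => l.
rewrite tensX mlinX tD_mcoef_mcat -scalerA mdeg_mcat PoszD big_split_ord /=.
by rewrite opprD addrACA.
Qed.

End TensorPairing.

Section Locality.
Variables (K : fieldType) (C : lmodType K).
Variables (prod : nat -> C -> C -> C) (loc : C -> C -> nat).
Hypothesis prod_linearl : forall s b, linear (prod s ^~ b).
Hypothesis prod_linearr : forall s a, linear (prod s a).
Hypothesis prod_loc : forall a b s, (loc a b <= s)%N -> prod s a b = 0.

Variables (W : lmodType K) (H : nat -> C -> W).
Hypothesis H_linear : forall s, linear (H s).

Lemma sum_loc_widen a b L : (loc a b <= L)%N ->
  \sum_(s <- iota 0 (loc a b)) H s (prod s a b) = \sum_(s <- iota 0 L) H s (prod s a b).
Proof.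
move=> le_loc; rewrite -(subnKC le_loc) iotaD big_cat /= [X in _ = _ + X]big1_seq ?addr0 //.
move=> s /andP[_]; rewrite mem_iota add0n => /andP[ge_s _].
by rewrite prod_loc ?linear0_of.
Qed.

Lemma sum_loc_linearl b : linear (fun a => \sum_(s <- iota 0 (loc a b)) H s (prod s a b)).
Proof.
move=> k a a' /=; set L := (loc (k *: a + a') b + loc a b + loc a' b)%N.
rewrite !(@sum_loc_widen _ _ L); try by rewrite /L; lia.
rewrite scaler_sumr -big_split /=; apply: eq_bigr => s _.
by rewrite prod_linearl H_linear.
Qed.

Lemma sum_loc_linearr a : linear (fun b => \sum_(s <- iota 0 (loc a b)) H s (prod s a b)).
Proof.
move=> k b b' /=; set L := (loc a (k *: b + b') + loc a b + loc a b')%N.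
rewrite !(@sum_loc_widen _ _ L); try by rewrite /L; lia.
rewrite scaler_sumr -big_split /=; apply: eq_bigr => s _.
by rewrite prod_linearr H_linear.
Qed.

End Locality.

Fixpoint choices (T : Type) (w : seq (seq T)) : seq (seq T) :=
  if w is l :: w' then [seq x :: r | x <- l, r <- choices w'] else [:: [::]].

Section Choices.
Variables (R : Type) (idx : R) (op : Monoid.com_law idx).

Lemma big_choices_cons (T : Type) (l : seq T) (w : seq (seq T)) (G : seq T -> R) :
  \big[op/idx]_(r <- choices (l :: w)) G r =
  \big[op/idx]_(x <- l) \big[op/idx]_(r <- choices w) G (x :: r).
Proof. exact: big_allpairs_dep. Qed.

Lemma big_choices_cat (T : Type) (w1 w2 : seq (seq T)) (G : seq T -> R) :
  \big[op/idx]_(r <- choices (w1 ++ w2)) G r =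
  \big[op/idx]_(r1 <- choices w1) \big[op/idx]_(r2 <- choices w2) G (r1 ++ r2).
Proof.
elim: w1 G => [|l w1 IHw] G; first by rewrite big_seq1.
by rewrite cat_cons !big_choices_cons; apply: eq_bigr => x _; rewrite IHw.
Qed.

Lemma size_choices (T : eqType) (w : seq (seq T)) r : r \in choices w -> size r = size w.
Proof.
elim: w r => [|l w IHw] r /=; first by rewrite inE => /eqP ->.
by case/allpairsPdep => [x [r' [_ /IHw <- ->]]].
Qed.

(* Choices recorded by positions rather than entries: unlike choices w, this
   list is duplicate-free, so permuting the leaves acts on it bijectively. *)
Definition index_choices (sz : seq nat) : seq (seq nat) := choices [seq iota 0 k | k <- sz].

Lemma mem_index_choices sz j :
  reflect (size j = size sz /\ forall i, (i < size sz)%N -> (nth 0 j i < nth 0 sz i)%N)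
          (j \in index_choices sz).
Proof.
elim: sz j => [|k sz IHsz] [|a j] /=.
- by rewrite inE eqxx; constructor.
- by rewrite inE; constructor => -[].
- by apply: (iffP allpairsPdep) => [[x [y []]] | []].
apply: (iffP allpairsPdep) => [[x [y [x_lt /IHsz[size_y y_lt] [-> ->]]]] | [[size_j] j_lt]].
  split=> [|[|i] /=]; rewrite ?size_y //; last exact: y_lt.
  by move: x_lt; rewrite mem_iota.
exists a, j; split=> //; first by rewrite mem_iota (j_lt 0%N).
by apply/IHsz; split=> // i; apply: (j_lt i.+1).
Qed.

Lemma uniq_index_choices sz : uniq (index_choices sz).
Proof.
elim: sz => [|k sz IHsz] //=; apply: allpairs_uniq_dep => //; first exact: iota_uniq.
by move=> [x1 y1] [x2 y2] _ _ [-> ->].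
Qed.

Lemma big_choices_index (T : Type) (x0 : T) (w : seq (seq T)) (G : seq T -> R) :
  \big[op/idx]_(r <- choices w) G r =
  \big[op/idx]_(j <- index_choices [seq size l | l <- w])
     G [seq nth x0 lk.1 lk.2 | lk <- zip w j].
Proof.
elim: w G => [|l w IHw] G; first by rewrite !big_seq1.
rewrite big_choices_cons /index_choices /= big_allpairs_dep -/(index_choices _).
by rewrite (big_nth x0) /index_iota subn0; apply: eq_bigr => a _; rewrite IHw.
Qed.

End Choices.

Lemma nth_enum_map n (T : Type) (x0 : T) (f : 'I_n -> T) (i : 'I_n) :
  nth x0 [seq f j | j <- enum 'I_n] i = f i.
Proof. by rewrite (nth_map i) ?size_enum_ord // nth_ord_enum. Qed.

Section PermuteChoices.
Variables (n : nat) (s : 'S_n).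

Definition permute_seq (T : Type) (x0 : T) (r : seq T) : seq T :=
  [seq nth x0 r (s i) | i <- enum 'I_n].

Lemma size_permute_seq (T : Type) (x0 : T) r : size (permute_seq x0 r) = n.
Proof. by rewrite size_map size_enum_ord. Qed.

Lemma nth_permute_seq (T : Type) (x0 : T) r (i : 'I_n) :
  nth x0 (permute_seq x0 r) i = nth x0 r (s i).
Proof. exact: nth_enum_map. Qed.

Lemma index_choices_ord (sz : 'I_n -> nat) j :
  reflect (size j = n /\ forall i : 'I_n, (nth 0 j i < sz i)%N)
          (j \in index_choices [seq sz i | i <- enum 'I_n]).
Proof.
have size_sz : size [seq sz i | i <- enum 'I_n] = n by rewrite size_map size_enum_ord.
apply: (iffP (mem_index_choices _ _)); rewrite size_sz => -[size_j j_lt].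
  by split=> // i; have := j_lt i (ltn_ord i); rewrite nth_enum_map.
split=> // i lt_in; have := j_lt (Ordinal lt_in).
by rewrite -[i]/(nat_of_ord (Ordinal lt_in)) nth_enum_map.
Qed.

Lemma permute_index_choices (sz : 'I_n -> nat) r :
  r \in index_choices [seq sz i | i <- enum 'I_n] ->
  permute_seq 0%N r \in index_choices [seq sz (s i) | i <- enum 'I_n].
Proof.
move=> /index_choices_ord[_ r_lt]; apply/index_choices_ord.
by split=> [|i]; rewrite ?size_permute_seq // nth_permute_seq.
Qed.

End PermuteChoices.

Lemma permute_seqK n (s : 'S_n) (T : Type) (x0 : T) r : size r = n ->
  permute_seq s^-1 x0 (permute_seq s x0 r) = r.
Proof.
move=> size_r; apply: (@eq_from_nth _ x0) => [|i]; rewrite size_permute_seq // => lt_in.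
by rewrite -[i]/(nat_of_ord (Ordinal lt_in)) !nth_permute_seq permKV.
Qed.

Lemma index_choices_perm n (s : 'S_n) (sz : 'I_n -> nat) :
  perm_eq (index_choices [seq sz (s i) | i <- enum 'I_n])
          [seq permute_seq s 0%N r | r <- index_choices [seq sz i | i <- enum 'I_n]].
Proof.
apply: uniq_perm; first exact: uniq_index_choices.
  rewrite map_inj_in_uniq ?uniq_index_choices // => r r'.
  move=> /index_choices_ord[size_r _] /index_choices_ord[size_r' _] eq_rr'.
  by rewrite -(permute_seqK s 0%N size_r) eq_rr' permute_seqK.
move=> j; apply/idP/mapP => [j_in | [r r_in ->]]; last exact: permute_index_choices.
have /index_choices_ord[size_j _] := j_in.
exists (permute_seq s^-1 0%N j); last by rewrite -{1}(invgK s) permute_seqK.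
have := permute_index_choices s^-1 j_in.
by rewrite (eq_map (fun i => congr1 sz (permKV s i))).
Qed.

Lemma big_choices_perm (R : Type) (idx : R) (op : Monoid.com_law idx) n (s : 'S_n)
    (T : Type) (x0 : T) (x : 'I_n -> seq T) (G : seq T -> R) :
  \big[op/idx]_(r <- choices [seq x (s i) | i <- enum 'I_n]) G r =
  \big[op/idx]_(j <- index_choices [seq size (x i) | i <- enum 'I_n])
     G [seq nth x0 (x (s i)) (nth 0%N j (s i)) | i <- enum 'I_n].
Proof.
rewrite (big_choices_index op x0) -map_comp.
rewrite (perm_big _ (index_choices_perm s (fun i => size (x i)))) big_map.
by apply: eq_bigr => j _; rewrite zip_map -map_comp.
Qed.

Section PseudoCoefficient.
Variables (K : fieldType) (C : lmodType K).
Variables (prod : nat -> C -> C -> C) (loc : C -> C -> nat).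
Hypothesis prod_linearl : forall s b, linear (prod s ^~ b).
Hypothesis prod_linearr : forall s a, linear (prod s a).
Hypothesis prod_loc : forall a b s, (loc a b <= s)%N -> prod s a b = 0.

Definition exponents n (r : seq (int * C)) (i : 'I_n) : int := nth 0 (map fst r) i.
Arguments exponents {n}.

Lemma exponents_cat_lshift n1 n2 r1 r2 (i : 'I_n1) : size r1 = n1 ->
  exponents (r1 ++ r2) (lshift n2 i) = exponents r1 i.
Proof. by move=> size_r1; rewrite /exponents map_cat nth_cat size_map size_r1 /= ltn_ord. Qed.

Lemma exponents_cat_rshift n1 n2 r1 r2 (j : 'I_n2) : size r1 = n1 ->
  exponents (r1 ++ r2) (rshift n1 j) = exponents r2 j.
Proof.
move=> size_r1; rewrite /exponents map_cat nth_cat size_map size_r1 /=.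
by rewrite ltnNge leq_addr /= addKn.
Qed.

Lemma sum_coeff_mul (W : lmodType K) (gam : int -> C -> W) x1 x2 :
  \sum_(p <- coeff_mul prod loc x1 x2) gam p.1 p.2 =
  \sum_(p <- x1) \sum_(q <- x2) \sum_(s <- iota 0 (loc p.2 q.2))
     gam (p.1 + q.1 - s%:Z) (binz K p.1 s *: prod s p.2 q.2).
Proof.
rewrite big_flatten big_allpairs_dep.
by apply: eq_bigr => p _; apply: eq_bigr => q _; rewrite big_map.
Qed.

Lemma sum_tpair_pseudo_mul n1 n2 (mu : 'I_(n1 + n2) -> int) (W : lmodType K)
    (gam : int -> C -> W) x y :
  (forall N, linear (gam N)) ->
  \sum_(P <- pseudo_mul prod loc x y) tpair mu (gam^~ P.2) P.1 =
  \sum_(p <- x) \sum_(q <- y) \sum_(s <- iota 0 (loc p.2 q.2))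
     tpair (fun i => mu (lshift n2 i))
       (fun N => tpair (fun j => mu (rshift n1 j))
          (fun N' => gam (N + N' - s%:Z) (binz K N s *: prod s p.2 q.2)) q.1) p.1.
Proof.
move=> gam_linear; rewrite big_flatten big_allpairs_dep.
apply: eq_bigr => p _; apply: eq_bigr => q _; rewrite big_map; apply: eq_bigr => s _.
rewrite tpair_tens Delta1 mulr1 tpair_Delta_mDs; apply: eq_tpair => N.
rewrite -tpair_scale_fun; apply: eq_tpair => N'.
by rewrite /= linearZ_of // addrAC.
Qed.

(* Quantifying over gam lets the induction absorb the outer products into a
   new gam; beta of coeff_zero is the instance of interest. *)
Definition coeff_pseudo_spec n (t : btree n) : Prop :=
  forall w : seq (seq (int * C)), size w = n ->
  forall (W : lmodType K) (gam : int -> C -> W), (forall N, linear (gam N)) ->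
  \sum_(p <- coeff_eval prod loc t w) gam p.1 p.2 =
  \sum_(r <- choices w) \sum_(P <- pseudo_eval prod loc t (map snd r))
     tpair (exponents r) (gam^~ P.2) P.1.

Lemma coeff_pseudo_leaf : coeff_pseudo_spec BLeaf.
Proof.
move=> [|l [|]] //= _ W gam _; rewrite big_flatten big_map.
by apply: eq_bigr => p _; rewrite !big_seq1 tpair1 big_ord1.
Qed.

Lemma coeff_pseudo_node n1 n2 (t1 : btree n1) (t2 : btree n2) :
  coeff_pseudo_spec t1 -> coeff_pseudo_spec t2 -> coeff_pseudo_spec (BNode t1 t2).
Proof.
move=> IH1 IH2 w size_w W gam gam_linear.
have size_w1 : size (take n1 w) = n1 by rewrite size_takel // size_w leq_addr.
have size_w2 : size (drop n1 w) = n2 by rewrite size_drop size_w addKn.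
have scaled_linear N N' s : linear (fun c => gam (N + N' - s%:Z) (binz K N s *: c)).
  by move=> a c c'; rewrite scalerDr scalerA mulrC -scalerA gam_linear.
pose gam2 N u N' v := \sum_(s <- iota 0 (loc u v))
  gam (N + N' - s%:Z) (binz K N s *: prod s u v).
have gam2_linear N u N' : linear (gam2 N u N').
  exact: (sum_loc_linearr prod_linearr prod_loc (scaled_linear N N')).
pose gam1 N u := \sum_(q <- coeff_eval prod loc t2 (drop n1 w)) gam2 N u q.1 q.2.
have gam1_linear N : linear (gam1 N).
  move=> a u u'; rewrite /gam1 scaler_sumr -big_split; apply: eq_bigr => q _.
  exact: (sum_loc_linearl prod_linearl prod_loc (scaled_linear N q.1)).
rewrite /= sum_coeff_mul -[LHS]/(\sum_(p <- _) gam1 p.1 p.2) IH1 //.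
rewrite -{2}(cat_take_drop n1 w) big_choices_cat; apply: eq_big_seq => r1 r1_in.
have size_r1 : size r1 = n1 by rewrite (size_choices r1_in).
have gam1E N (P : {mpoly K[n1]} * C) :
    gam1 N P.2 = \sum_(r2 <- choices (drop n1 w))
      \sum_(Q <- pseudo_eval prod loc t2 (map snd r2)) \sum_(s <- iota 0 (loc P.2 Q.2))
        tpair (exponents r2)
          (fun N' => gam (N + N' - s%:Z) (binz K N s *: prod s P.2 Q.2)) Q.1.
  rewrite [LHS](IH2 _ size_w2 W (gam2 N P.2)) //.
  by apply: eq_bigr => r2 _; apply: eq_bigr => Q _; rewrite -tpair_sum_fun.
under [LHS]eq_bigr => P _ do rewrite (eq_tpair _ (gam1E^~ P)) tpair_sum_fun.
rewrite exchange_big /=; apply: eq_big_seq => r2 r2_in.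
have size_r2 : size r2 = n2 by rewrite (size_choices r2_in).
rewrite map_cat take_size_cat ?drop_size_cat ?size_map // sum_tpair_pseudo_mul //.
apply: eq_bigr => P _; rewrite tpair_sum_fun; apply: eq_bigr => Q _.
rewrite tpair_sum_fun; apply: eq_bigr => s _.
rewrite [RHS](eq_tpair_mu _ (fun i => exponents_cat_lshift n2 r2 i size_r1)).
by apply: eq_tpair => N; apply: eq_tpair_mu => j; rewrite exponents_cat_rshift.
Qed.

Lemma coeff_pseudo n (t : btree n) : coeff_pseudo_spec t.
Proof.
elim: t => [|n1 n2 t1 IH1 t2 IH2]; first exact: coeff_pseudo_leaf.
exact: coeff_pseudo_node.
Qed.

End PseudoCoefficient.

Lemma tpair_tensH_zero (K : fieldType) (C : lmodType K) (D : C -> C) n (mu : 'I_n -> int)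
    (W : lmodType K) (beta : int -> C -> W) (x : seq ({mpoly K[n]} * C)) :
  (forall N, linear (beta N)) ->
  (forall N (h : {poly K}) c,
     \sum_(k < size h) (h`_k * (-1) ^+ k * ffz K N k) *: beta (N - k%:Z) c
     = beta N (hact D h c)) ->
  tensH_zero D x -> \sum_(p <- x) tpair mu (beta^~ p.2) p.1 = 0.
Proof.
move=> beta_linear beta_balanced x_zero.
apply: (x_zero W (fun F c => tpair mu (beta^~ c) F)).
- by move=> k F F' c; rewrite linearP.
- move=> k F c c'; rewrite -tpair_scale_fun -tpair_add_fun.
  by apply: eq_tpair => N; rewrite beta_linear.
move=> F h c; rewrite tpair_Delta; apply: eq_tpair => N; rewrite -beta_balanced.
by apply: eq_bigr => j _; rewrite /tD_coef mulrA.
Qed.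

Section CoefficientIdentity.
Variables (K : fieldType) (C : lmodType K).
Variables (prod : nat -> C -> C -> C) (loc : C -> C -> nat).
Hypothesis prod_linearl : forall s b, linear (prod s ^~ b).
Hypothesis prod_linearr : forall s a, linear (prod s a).
Hypothesis prod_loc : forall a b s, (loc a b <= s)%N -> prod s a b = 0.

Lemma sum_coeff_f n (ts : 'S_n -> seq (K * btree n)) (x : 'I_n -> seq (int * C))
    (W : lmodType K) (gam : int -> C -> W) :
  (forall N, linear (gam N)) ->
  let pick j i := nth (0, 0) (x i) (nth 0%N j i) in
  \sum_(p <- coeff_f prod loc ts x) gam p.1 p.2 =
  \sum_(j <- index_choices [seq size (x i) | i <- enum 'I_n])
    \sum_(P <- fstar prod loc ts (fun i => (pick j i).2))
      tpair (fun i => (pick j i).1) (gam^~ P.2) P.1.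
Proof.
move=> gam_linear pick; rewrite /coeff_f /fstar big_flatten big_map.
under eq_bigr => s _ do rewrite big_flatten big_map.
have inner (s : 'S_n) (ct : K * btree n) :
    \sum_(p <- [seq (p.1, ct.1 *: p.2)
               | p <- coeff_eval prod loc ct.2 [seq x (s i) | i <- enum 'I_n]])
      gam p.1 p.2 =
    ct.1 *: \sum_(j <- index_choices [seq size (x i) | i <- enum 'I_n])
      \sum_(P <- pseudo_eval prod loc ct.2 [seq (pick j (s i)).2 | i <- enum 'I_n])
        tpair (fun i => (pick j (s i)).1) (gam^~ P.2) P.1.
  rewrite big_map (eq_bigr (fun p => ct.1 *: gam p.1 p.2)) => [|p _]; last first.
    by rewrite linearZ_of.
  have size_xs : size [seq x (s i) | i <- enum 'I_n] = n by rewrite size_map size_enum_ord.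
  rewrite -scaler_sumr (coeff_pseudo prod_linearl prod_linearr prod_loc _ size_xs gam_linear).
  rewrite (big_choices_perm _ s (0, 0)).
  congr (_ *: _); apply: eq_bigr => j _; rewrite -map_comp; apply: eq_bigr => P _.
  by apply: eq_tpair_mu => i; rewrite /exponents -map_comp nth_enum_map.
under eq_bigr => s _ do under eq_bigr => ct _ do rewrite inner scaler_sumr.
under eq_bigr => s _ do rewrite exchange_big.
rewrite exchange_big; apply: eq_bigr => j _.
rewrite big_flatten big_map; apply: eq_bigr => s _.
rewrite big_flatten big_map; apply: eq_bigr => ct _.
rewrite scaler_sumr big_map; apply: eq_bigr => P _.
by rewrite tpair_perm linearZ.
Qed.

End CoefficientIdentity.

Theorem theorem3p2 (K : fieldType) (charK : [pchar K] =i pred0)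
  (C : lmodType K) (D : C -> C) (prod : nat -> C -> C -> C)
  (loc : C -> C -> nat) (Hconf : is_conformal D prod loc)
  (n : nat) (ts : 'S_n -> seq (K * btree n)) :
  (forall a : 'I_n -> C, tensH_zero D (fstar prod loc ts a)) ->
  forall x : 'I_n -> seq (int * C), coeff_zero D (coeff_f prod loc ts x).
Proof.
move=> fstar_zero x W beta beta_linear beta_balanced.
case: Hconf => [[_ [prod_linl prod_linr]] prod_loc _ _].
have prod_linearl s b : linear (prod s ^~ b) by move=> k a a'; apply: prod_linl.
have prod_linearr s a : linear (prod s a) by move=> k b b'; apply: prod_linr.
rewrite (sum_coeff_f prod_linearl prod_linearr prod_loc ts x beta_linear) big1 // => j _.
exact: tpair_tensH_zero beta_linear beta_balanced (fstar_zero _).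
Qed.
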